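(* Let $k\ge2$ be the cache size and $N\ge k+1$. For the star access graph $S_N$ on $N$ vertices, \[-\frac12+\frac1{2(k-1)}\le\mathrm{Min}^{S_N}(\mathrm{FIFO},\mathrm{LRU})\le-\frac12+\frac1{2(k-1)}+\frac1{2k(k-1)}.\]
   Context: Paging: a cache holds at most $k$ pages and is initially empty. A request to a page in the cache is a hit; otherwise it is a fault, the page is brought into the cache, evicting a page first if the cache is full. $\mathcal{A}(I)$ is the number of faults of $\mathcal{A}$ on request sequence $I$. LRU evicts the least recently requested cached page; FIFO evicts the cached page that entered the cache earliest. The star $S_N$ has a central vertex adjacent to $N-1$ leaves, with no other edges. Access graph: a graph $G$ whose vertices are the pages; a request sequence respects $G$ if any two consecutive requests are identical or adjacent in $G$; $L(G)$ is the set of such sequences. $\mathrm{Min}_{\mathcal{A},\mathcal{B}}(n,G)=\min\{\mathcal{A}(I)-\mathcal{B}(I): I\in L(G),|I|=n\}$ and $\mathrm{Min}^G(\mathcal{A},\mathcal{B})=\liminf_{n\to\infty}\mathrm{Min}_{\mathcal{A},\mathcal{B}}(n,G)/n$. *)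

From HB Require Import structures.
From mathcomp Require Import all_boot all_order all_algebra.
From mathcomp Require Import all_classical all_reals all_analysis.
Set Implicit Arguments. Unset Strict Implicit. Unset Printing Implicit Defensive.
Import Order.TTheory GRing.Theory Num.Theory.

(* A cache is a sequence of pages.  For FIFO it is ordered by time of entry
   into the cache (head = earliest); for LRU it is ordered by time of last
   request (head = least recently requested). *)
Section Paging.
Variable T : eqType.
Variable k : nat.

Definition fault_insert (c : seq T) (x : T) : seq T :=
  if size c < k then rcons c x else rcons (behead c) x.

Definition fifo_step (c : seq T) (x : T) : seq T * bool :=
  if x \in c then (c, false) else (fault_insert c x, true).

Definition lru_step (c : seq T) (x : T) : seq T * bool :=
  if x \in c then (rcons (rem x c) x, false) else (fault_insert c x, true).

Fixpoint run_faults (step : seq T -> T -> seq T * bool) (c : seq T) (s : seq T)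
  : nat :=
  match s with
  | [::] => 0
  | x :: s' => let: (c', f) := step c x in f + run_faults step c' s'
  end.

Definition FIFO (s : seq T) : nat := run_faults fifo_step [::] s.
Definition LRU (s : seq T) : nat := run_faults lru_step [::] s.
End Paging.

Definition star (N : nat) : rel 'I_N :=
  fun x y => (x != y) && ((val x == 0) || (val y == 0)).

Definition respects (T : eqType) (G : rel T) (s : seq T) : bool :=
  if s is x :: s' then path (fun a b => (a == b) || G a b) x s' else true.

(* minimum of f over the (finite) set {t | P t}; 0 if that set is empty *)
Definition fmin (X : finType) (P : pred X) (f : X -> int) : int :=
  if [pick t | P t] is Some t0 then f (Order.arg_min t0 P f) else 0.

Definition MinFL (k N n : nat) : int :=
  fmin (fun t : n.-tuple 'I_N => respects (@star N) t)
       (fun t => (Posz (FIFO k (val t)) - Posz (LRU k (val t)))%R).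

From mathcomp Require Import all_boot all_order all_algebra.
From mathcomp Require Import all_classical all_reals all_analysis.
From mathcomp Require Import zify ring lra.

Set Implicit Arguments. Unset Strict Implicit. Unset Printing Implicit Defensive.
Import Order.TTheory GRing.Theory Num.Theory.

(* Lower bound: run FIFO and LRU side by side on a sequence respecting the
   star.  A potential bounded by 3k makes every request satisfy
   2(k-1)[LRU faults] + dPhi <= 2(k-1)[FIFO faults] + (k-2), hence
   FIFO - LRU >= -((k-2)n + 3k)/(2(k-1)).
   Upper bound: with the centre requested between any two leaves, let the
   leaves run through k, k-1, ..., 1, k, ... cyclically.  LRU keeps only k-1
   leaves and faults on every one of them, while FIFO faults only k+1 times
   in each period of k(k-1) leaves; so after r periods FIFO - LRU =
   r(k+1) - rk(k-1) on a sequence of length 2rk(k-1) + O(k). *)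

Section SeqFacts.
Variable T : eqType.
Implicit Types (x : T) (s : seq T).

Lemma rem_cat x s1 s2 :
  rem x (s1 ++ s2) = if x \in s1 then rem x s1 ++ s2 else s1 ++ rem x s2.
Proof.
elim: s1 => [|y s1 IH] //=; rewrite in_cons (eq_sym x y).
by case: (y =P x) => //= _; rewrite IH; case: (x \in s1).
Qed.

Lemma rem_cat_cons x s1 s2 : x \notin s1 -> rem x (s1 ++ x :: s2) = s1 ++ s2.
Proof. by move=> xs1; rewrite rem_cat (negbTE xs1) /= eqxx. Qed.

Lemma rem_rcons x s : x \notin s -> rem x (rcons s x) = s.
Proof. by move=> xs; rewrite -cats1 rem_cat_cons ?cats0. Qed.

Lemma size_rcons_rem x s : x \in s -> size (rcons (rem x s) x) = size s.
Proof. by move=> xs; rewrite size_rcons size_rem // prednK // lt0n size_eq0; case: s xs. Qed.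

Lemma rcons_rem_uniq x s : uniq s -> uniq (rcons (rem x s) x).
Proof. by move=> us; rewrite rcons_uniq mem_rem_uniqF // rem_uniq. Qed.

End SeqFacts.

Lemma run_faults_cons (T : eqType) (step : seq T -> T -> seq T * bool) c x s :
  run_faults step c (x :: s) = (step c x).2 + run_faults step (step c x).1 s.
Proof. by rewrite /=; case: (step c x). Qed.

Section FaultInsert.
Variables (T : eqType) (k : nat).
Implicit Types (x : T) (c : seq T).

Lemma fault_insert_nil x : 0 < k -> fault_insert k [::] x = [:: x].
Proof. by rewrite /fault_insert => ->. Qed.

Lemma fault_insert_props c x : 0 < k -> uniq c -> size c <= k -> x \notin c ->
  [/\ uniq (fault_insert k c x), size (fault_insert k c x) <= k & x \in fault_insert k c x].
Proof.
move=> k_gt0 uc szc xc; rewrite /fault_insert; case: ltnP => szk.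
  by rewrite rcons_uniq xc uc size_rcons szk mem_rcons mem_head.
rewrite rcons_uniq size_rcons size_behead mem_rcons mem_head; split => //.
- rewrite (contra (@mem_behead _ _ x)) //.
  by case: c uc {szc szk xc} => //= a c /andP[].
- by case: (size c) szc szk => //= n; lia.
Qed.

Lemma lru_step_keeps_last c p x : 1 < k -> uniq (rcons c p) -> size (rcons c p) <= k ->
  x != p -> exists c', [/\ (lru_step k (rcons c p) x).1 = rcons c' x, uniq (rcons c' x),
                            size (rcons c' x) <= k & p \in c'].
Proof.
move=> k_gt1 uc szc xp; case: (boolP (x \in rcons c p)) => xc.
  exists (rem x (rcons c p)); rewrite /lru_step xc size_rcons_rem ?rcons_rem_uniq //.
  by split => //; apply: rem_mem; rewrite ?mem_rcons ?mem_head // eq_sym.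
have [u1 s1 _] := fault_insert_props (ltnW k_gt1) uc szc xc.
exists (if size (rcons c p) < k then rcons c p else behead (rcons c p)).
have -> : (lru_step k (rcons c p) x).1 =
    rcons (if size (rcons c p) < k then rcons c p else behead (rcons c p)) x.
  by rewrite /lru_step (negbTE xc) /fault_insert; case: ifP.
move: u1 s1; rewrite /fault_insert; case: ifP => [_|szk]; first by rewrite mem_rcons mem_head.
by case: c {uc szc xc} szk => [|a c] /=; [lia | rewrite mem_rcons mem_head].
Qed.

End FaultInsert.

Section RunCache.
Variables (T : eqType) (step : seq T -> T -> seq T * bool).

Definition run_cache (c s : seq T) : seq T := foldl (fun c x => (step c x).1) c s.

Lemma run_cache_cat c s1 s2 : run_cache c (s1 ++ s2) = run_cache (run_cache c s1) s2.
Proof. exact: foldl_cat. Qed.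

Lemma run_faults_cat c s1 s2 :
  run_faults step c (s1 ++ s2) = run_faults step c s1 + run_faults step (run_cache c s1) s2.
Proof.
elim: s1 c => [|x s1 IH] c //=.
by case: (step c x) => c' b; rewrite IH addnA.
Qed.

End RunCache.

Section Relabel.
Variables (A B : eqType) (g : B -> A) (k : nat).
Hypothesis g_inj : injective g.

Lemma map_rem x (s : seq B) : rem (g x) (map g s) = map g (rem x s).
Proof. by elim: s => [|y s IH] //=; rewrite (inj_eq g_inj); case: ifP => //= _; rewrite IH. Qed.

Lemma fault_insert_map (c : seq B) x :
  fault_insert k (map g c) (g x) = map g (fault_insert k c x).
Proof. by rewrite /fault_insert size_map; case: ifP => _; rewrite map_rcons ?behead_map. Qed.

Lemma run_faults_fifo_map (c s : seq B) :
  run_faults (fifo_step k) (map g c) (map g s) = run_faults (fifo_step k) c s.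
Proof.
elim: s c => [|x s IH] c //=; rewrite /fifo_step (mem_map g_inj).
by case: ifP => _ /=; rewrite ?fault_insert_map IH.
Qed.

Lemma run_faults_lru_map (c s : seq B) :
  run_faults (lru_step k) (map g c) (map g s) = run_faults (lru_step k) c s.
Proof.
elim: s c => [|x s IH] c //=; rewrite /lru_step (mem_map g_inj).
by case: ifP => _ /=; rewrite ?map_rem -?map_rcons ?fault_insert_map IH.
Qed.

End Relabel.

Section PotentialBound.
Variables (T : eqType) (k : nat) (center : pred T).
Hypothesis k_gt1 : 1 < k.
Hypothesis center_uniq : forall x y, center x -> center y -> x = y.

Definition star_adj (a b : T) := (a == b) || ((a != b) && (center a || center b)).

Definition potential (p : T) (Q D : seq T) : nat :=
  2 * ((k - 1) - minn (count (predC center) Q) (k - 1))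
  + (if center p then k - 2 else 0) + (if has center D then 0 else 2).

Record coupled (C P Q : seq T) (p : T) : Prop := Coupled {
  coupled_uniq_fifo : uniq C;
  coupled_size_fifo : size C <= k;
  coupled_uniq_lru : uniq (P ++ Q);
  coupled_size_lru : size (P ++ Q) <= k;
  coupled_last_fifo : p \in C;
  coupled_last_lru : exists Q0, Q = rcons Q0 p;
  coupled_center : forall y, center y -> y \in C -> y \in P ++ Q;
  coupled_no_center : ~~ has center (P ++ Q) -> P ++ Q = [:: p];
  coupled_suffix : {subset Q <= C} }.

Definition amortized (C P Q : seq T) (p x : T) :=
  exists P' Q', [/\ (lru_step k (P ++ Q) x).1 = P' ++ Q',
    coupled (fifo_step k C x).1 P' Q' x &
    2 * (k - 1) * (lru_step k (P ++ Q) x).2 + potential x Q' (P' ++ Q') <=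
      2 * (k - 1) * (fifo_step k C x).2 + (k - 2) + potential p Q (P ++ Q)].

Lemma potential_le p Q D : potential p Q D <= 3 * k.
Proof. by rewrite /potential; case: (center p); case: (has center D) => /=; lia. Qed.

Lemma coupled_lru_rcons C P Q p : coupled C P Q p ->
  exists2 D0, P ++ Q = rcons D0 p & p \notin D0.
Proof.
case=> _ _ uD _ _ [Q0 eQ] _ _ _; subst Q; exists (P ++ Q0); first by rewrite rcons_cat.
by move: uD; rewrite -rcons_cat rcons_uniq => /andP[].
Qed.

Lemma count_leaves_lt (Q : seq T) p : center p -> p \in Q ->
  count (predC center) Q < size Q.
Proof.
move=> cp pQ; rewrite -(count_predC center Q).
have : 0 < count center Q by rewrite -has_count; apply/hasP; exists p.
lia.
Qed.

Lemma lru_hit_split (P Q : seq T) x : uniq (P ++ Q) -> x \in P ++ Q ->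
  exists P' Q0', [/\ rcons (rem x (P ++ Q)) x = P' ++ rcons Q0' x,
     {subset rcons Q0' x <= x :: Q},
     count (predC center) Q <= count (predC center) (rcons Q0' x) &
     (center x -> count (predC center) (rcons Q0' x) = count (predC center) Q)].
Proof.
move=> uD; rewrite mem_cat; case: (boolP (x \in P)) => xP /= xQ.
  exists (rem x P), Q; rewrite rem_cat xP rcons_cat -cats1 count_cat; split => //.
  - by move=> y; rewrite mem_cat mem_seq1 in_cons orbC.
  - by lia.
  - by move=> /= ->; lia.
exists P, (rem x Q); rewrite rem_cat (negbTE xP) rcons_cat; split => //.
- by move=> y; rewrite mem_rcons !in_cons => /orP[->//|/mem_rem ->]; rewrite orbT.
- by rewrite (permP (perm_to_rem xQ)) -cats1 count_cat /=; lia.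
- by move=> _; rewrite (permP (perm_to_rem xQ)) -cats1 count_cat /=; lia.
Qed.

Lemma amortized_repeat C P Q p : coupled C P Q p -> amortized C P Q p p.
Proof.
move=> I; have [D0 eD pD0] := coupled_lru_rcons I.
have pD : p \in P ++ Q by rewrite eD mem_rcons mem_head.
exists P, Q; rewrite /fifo_step /lru_step (coupled_last_fifo I) pD eD rem_rcons //.
by rewrite -eD /=; split => //; lia.
Qed.

Lemma amortized_lru_hit C P Q p x : coupled C P Q p -> x \in C -> x != p ->
  center p || center x -> x \in P ++ Q -> amortized C P Q p x.
Proof.
move=> [uC sC uD sD _ _ centerC noCenter QC] xC xp cpx xD.
have [P' [Q0' [eD' sQ' cQ' cQx]]] := lru_hit_split uD xD.
have memD' : P' ++ rcons Q0' x =i P ++ Q.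
  move=> y; rewrite -eD' mem_rcons in_cons.
  case: (eqVneq y x) => [->|yx] /=; first by rewrite xD.
  by rewrite (mem_rem_uniq _ uD) inE yx.
have hasE : has center (P' ++ rcons Q0' x) = has center (P ++ Q) by apply: eq_has_r.
exists P', (rcons Q0' x); rewrite /fifo_step /lru_step xC xD /= -eD'; split => //.
  split => //.
  - by rewrite -eD' rcons_rem_uniq.
  - by rewrite -eD' size_rcons_rem.
  - by exists Q0'.
  - by move=> y cy yC; rewrite memD' centerC.
  - rewrite hasE => /noCenter eD; move: xD; rewrite eD inE => /eqP exp.
    by rewrite exp eqxx in xp.
  - by move=> y /sQ'; rewrite in_cons => /predU1P[->|/QC].
rewrite /potential eD' hasE; case cx: (center x).
- have -> : center p = false.
    by apply/negP => cp; move: xp; rewrite (center_uniq cx cp) eqxx.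
  by rewrite (cQx cx) /=; lia.
- by rewrite cx orbF in cpx; rewrite cpx /=; lia.
Qed.

Lemma amortized_lru_fault C P Q p x : coupled C P Q p -> x \in C ->
  center p || center x -> x \notin P ++ Q -> amortized C P Q p x.
Proof.
move=> [uC sC uD sD _ [Q0 eQ] centerC _ QC] xC cpx xD.
have pQ : p \in Q by rewrite eQ mem_rcons mem_head.
have cx : center x = false by apply/negP => cx; move: xD; rewrite centerC.
have cp : center p by rewrite cx orbF in cpx.
have xQ : x \notin Q by move: xD; rewrite mem_cat negb_or => /andP[].
have szQ : size Q < k.
  have uQ : uniq Q by move: uD; rewrite cat_uniq => /and3P[].
  apply: leq_trans sC; apply: (uniq_leq_size (s1 := x :: Q)); first by rewrite /= xQ.
  by move=> y /predU1P[->|/QC].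
have [P' eD'] : exists P', fault_insert k (P ++ Q) x = P' ++ rcons Q x.
  rewrite /fault_insert; case: ltnP => szD; first by exists P; rewrite rcons_cat.
  case: P {uD sD xD centerC} szD => [|a P1] szD; last by exists P1; rewrite /= rcons_cat.
  by move: szD; rewrite /=; lia.
have [uD' sD' _] := fault_insert_props (ltnW k_gt1) uD sD xD.
have hasD : has center (P ++ Q) by apply/hasP; exists p; rewrite // mem_cat pQ orbT.
have hasD' : has center (P' ++ rcons Q x).
  by apply/hasP; exists p; rewrite // mem_cat mem_rcons in_cons pQ !orbT.
exists P', (rcons Q x); rewrite /fifo_step /lru_step xC (negbTE xD) /= -eD'.
split => //.
  split => //; rewrite -?eD' //.
  - by exists Q.
  - by move=> y cy _; rewrite (center_uniq cy cp) eD' mem_cat mem_rcons in_cons pQ !orbT.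
  - by rewrite eD' hasD'.
  - by move=> y; rewrite mem_rcons => /predU1P[->|/QC].
have := count_leaves_lt cp pQ.
rewrite /potential eD' hasD hasD' cp cx -cats1 count_cat /= cx.
by move: szQ; clear -k_gt1; lia.
Qed.

Lemma amortized_fifo_fault C P Q p x : coupled C P Q p -> x \notin C ->
  center p || center x -> amortized C P Q p x.
Proof.
move=> I xC cpx; have [D0 eD _] := coupled_lru_rcons I.
case: I => uC sC uD sD pC [Q0 eQ] _ noCenter _.
have xp : x != p by apply: contraNneq xC => ->.
have [uC' sC' xC'] := fault_insert_props (ltnW k_gt1) uC sC xC.
have uD0 : uniq (rcons D0 p) by rewrite -eD.
have sD0 : size (rcons D0 p) <= k by rewrite -eD.
have [P' [eD' uD' sD' pP']] := lru_step_keeps_last k_gt1 uD0 sD0 xp.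
have hasD' : has center (rcons P' x).
  case cx: (center x); first by apply/hasP; exists x; rewrite ?mem_rcons ?mem_head.
  by rewrite cx orbF in cpx; apply/hasP; exists p; rewrite ?mem_rcons ?in_cons ?pP' ?orbT.
exists P', [:: x]; rewrite /fifo_step (negbTE xC) /= eD eD' cats1; split => //.
  split; rewrite ?cats1 //.
  - by exists [::].
  - by move=> y cy _; have [z zD cz] := hasP hasD'; rewrite (center_uniq cy cz).
  - by rewrite hasD'.
  - by move=> y; rewrite mem_seq1 => /eqP->.
have phi_after : potential x [:: x] (rcons P' x) = if center x then 3 * k - 4 else 2 * k - 4.
  by rewrite /potential hasD' /=; case: (center x) => /=; clear -k_gt1; lia.
rewrite phi_after; case cx: (center x); last first.
  rewrite cx orbF in cpx.
  have : k - 2 <= potential p Q (rcons D0 p) by rewrite /potential cpx addnAC leq_addl.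
  by case: (_ .2); move: (potential _ _ _) => phi; clear -k_gt1; lia.
case: (boolP (x \in rcons D0 p)) => xD.
  by rewrite /lru_step xD /=; move: (potential _ _ _) => phi; clear -k_gt1; lia.
have noC : ~~ has center (rcons D0 p).
  by apply/hasP => -[z zD cz]; move: xD; rewrite (center_uniq cx cz) zD.
have eDp : rcons D0 p = [:: p] by rewrite -eD noCenter // eD.
have D00 : D0 = [::].
  by apply/eqP; rewrite -size_eq0; move/(congr1 size): eDp; rewrite size_rcons => -[->].
have cp : center p = false.
  by apply/negbTE; apply: contra noC => cp; apply/hasP; exists p; rewrite ?mem_rcons ?mem_head.
have eQ' : Q = [:: p].
  move: eD; rewrite D00; case: P {uD sD noCenter} => [//|a P] [_].
  by move/(congr1 size); rewrite size_cat eQ size_rcons addnS.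
rewrite /lru_step (negbTE xD) /potential eQ' D00 cp /= cp /=.
by clear -k_gt1; lia.
Qed.

Lemma amortized_step C P Q p x : coupled C P Q p -> star_adj p x -> amortized C P Q p x.
Proof.
move=> I; case: (eqVneq x p) => [->|xp] adj_px; first exact: amortized_repeat.
have cpx : center p || center x by move: adj_px; rewrite /star_adj eq_sym (negbTE xp).
case: (boolP (x \in C)) => xC; last exact: amortized_fifo_fault.
case: (boolP (x \in P ++ Q)) => xD; first exact: amortized_lru_hit.
exact: amortized_lru_fault.
Qed.

Lemma amortized_run C P Q p s : coupled C P Q p -> path star_adj p s ->
  2 * (k - 1) * run_faults (lru_step k) (P ++ Q) s <=
  2 * (k - 1) * run_faults (fifo_step k) C s + (k - 2) * size s + potential p Q (P ++ Q).
Proof.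
elim: s C P Q p => [|x s IH] C P Q p I; first by rewrite /= !muln0.
case/andP=> /(amortized_step I) [P' [Q' [eD I' bound]]] /(IH _ _ _ _ I').
rewrite !run_faults_cons eD /= !mulnDr mulnS.
move: bound; move: (2 * (k - 1) * _) (2 * (k - 1) * _) => lru_cost fifo_cost.
by move: (2 * _ * _) (2 * _ * _) (_ * size s) (potential _ _ _) (potential _ _ _) => *; lia.
Qed.

Lemma LRU_le_FIFO x s : path star_adj x s ->
  2 * (k - 1) * LRU k (x :: s) <= 2 * (k - 1) * FIFO k (x :: s) + (k - 2) * size (x :: s) + 3 * k.
Proof.
move=> xs; rewrite /LRU /FIFO !run_faults_cons.
rewrite /fifo_step /lru_step /= (fault_insert_nil _ (ltnW k_gt1)) /=.
have I : coupled [:: x] [::] [:: x] x.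
  by split => //=; [lia | lia | exact: mem_head | exists [::]].
have := amortized_run I xs; have := potential_le x [:: x] [:: x].
rewrite /= !mulnDr !mulnS.
by move: (2 * _ * _) (2 * _ * _) (_ * size s) (potential _ _ _) => *; lia.
Qed.

End PotentialBound.

Lemma iota_rcons m n : rcons (iota m n) (m + n) = iota m n.+1.
Proof. by rewrite -cats1 -addn1 iotaD. Qed.

Lemma iota1_rcons n : 0 < n -> iota 1 n = rcons (iota 1 n.-1) n.
Proof. by case: n => // n _; rewrite -iota_rcons add1n. Qed.

Lemma traject_iter (T : Type) (f : T -> T) x n :
  traject f x n = [seq iter i f x | i <- iota 0 n].
Proof.
elim: n x => [|n IH] x //=; rewrite IH -[1]/(1 + 0) iotaDl -map_comp.
by congr (_ :: _); apply: eq_map => i /=; rewrite -iterSr.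
Qed.

Definition with_center (xs : seq nat) : seq nat := flatten [seq [:: x; 0] | x <- xs].

Lemma with_center_cat xs ys : with_center (xs ++ ys) = with_center xs ++ with_center ys.
Proof. by rewrite /with_center map_cat flatten_cat. Qed.

Lemma size_with_center xs : size (with_center xs) = 2 * size xs.
Proof. by elim: xs => [|x xs IH] //=; rewrite IH; lia. Qed.

Lemma mem_with_center y xs : y \in with_center xs -> (y == 0) || (y \in xs).
Proof.
elim: xs => [|x xs IH] //=; rewrite !in_cons.
by case/orP => [->|/orP[->|/IH/orP[->|->]]]; rewrite ?orbT.
Qed.

Lemma all_with_center (C xs : seq nat) : 0 \in C -> {subset xs <= C} -> all (mem C) (with_center xs).
Proof.
move=> C0; elim: xs => [|x xs IH] //= xsC.
by rewrite xsC ?mem_head //= C0 IH // => y ys; apply: xsC; rewrite in_cons ys orbT.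
Qed.

Lemma with_center_cons x xs : with_center (x :: xs) = [:: x; 0] ++ with_center xs.
Proof. by []. Qed.

Lemma fifo_hits k (C s : seq nat) : all (mem C) s ->
  run_faults (fifo_step k) C s = 0 /\ run_cache (fifo_step k) C s = C.
Proof. by elim: s => [|x s IH] //= /andP[xC sC]; rewrite /fifo_step xC /=; apply: IH. Qed.

Section Adversary.
Variable k : nat.
Hypothesis k_gt1 : 1 < k.

Definition cpred (x : nat) := if x == 1 then k else x.-1.

Lemma cpred_range x : 1 <= x <= k -> 1 <= cpred x <= k.
Proof. by rewrite /cpred; case: eqP; lia. Qed.

Lemma iter_cpred j i : 1 <= j <= k -> i <= k ->
  iter i cpred j = if i < j then j - i else j + k - i.
Proof.
move=> hj; elim: i => [|i IH] hi /=; first by case: ifP; lia.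
rewrite IH ?(ltnW hi) // /cpred.
by case: (ltnP i j) => h1; case: (ltnP i.+1 j) => h2; case: eqP => h3; lia.
Qed.

Lemma iter_cpred_k x : 1 <= x <= k -> iter k cpred x = x.
Proof. by move=> hx; rewrite iter_cpred // ltnNge; case: ifP; lia. Qed.

Lemma iter_cpred_mulk m x : 1 <= x <= k -> iter (m * k) cpred x = x.
Proof. by move=> hx; elim: m => [|m IH] //; rewrite mulSn iterD IH iter_cpred_k. Qed.

Lemma iter_cpred_km1 j : 1 <= j <= k -> iter (k - 1) cpred j = if j == k then 1 else j.+1.
Proof. by move=> hj; rewrite iter_cpred; [case: ifP; case: eqP; lia | | lia]. Qed.

Definition fifo_cache j := iota j.+1 (k - j) ++ iota 0 j.

Lemma mem_fifo_cache j y : j <= k -> (y \in fifo_cache j) = (y <= k) && (y != j).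
Proof. by move=> hj; rewrite mem_cat !mem_iota; lia. Qed.

Lemma size_fifo_cache j : j <= k -> size (fifo_cache j) = k.
Proof. by move=> hj; rewrite size_cat !size_iota; lia. Qed.

Lemma fifo_cache_fault j : j <= k ->
  fifo_step k (fifo_cache j) j = (fifo_cache (if j == k then 0 else j.+1), true).
Proof.
move=> hj; rewrite /fifo_step mem_fifo_cache // eqxx andbF /fault_insert size_fifo_cache // ltnn.
congr (_, _); case: eqP => [->|njk]; rewrite /fifo_cache.
  rewrite subnn subn0 cats0 /= (iota1_rcons (ltnW k_gt1)).
  by case: k k_gt1.
have -> : k - j = (k - j.+1).+1 by lia.
by rewrite /= rcons_cat -{3}(add0n j) iota_rcons.
Qed.

Lemma fifo_round j : 1 <= j <= k ->
  run_faults (fifo_step k) (fifo_cache j) (with_center (traject cpred j (k - 1))) = 1 + (j == k) /\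
  run_cache (fifo_step k) (fifo_cache j) (with_center (traject cpred j (k - 1))) =
    fifo_cache (if j == k then 1 else j.+1).
Proof.
move=> hj; set t := if j == k then 1 else j.+1.
have -> : k - 1 = (k - 2).+1 by lia.
rewrite trajectS with_center_cons run_faults_cat run_cache_cat /= fifo_cache_fault; last lia.
have center_step : fifo_step k (fifo_cache (if j == k then 0 else j.+1)) 0 = (fifo_cache t, j == k).
  rewrite /t; case: eqP => [_|njk]; last by rewrite /fifo_step mem_fifo_cache //; lia.
  by rewrite fifo_cache_fault //; case: eqP => //; lia.
have tk : 1 <= t <= k by rewrite /t; case: eqP; lia.
have hits : all (mem (fifo_cache t)) (with_center (traject cpred (cpred j) (k - 2))).
  apply: all_with_center; first by rewrite mem_fifo_cache; lia.
  move=> y /trajectP [i hi ->]; rewrite -iterSr mem_fifo_cache; last lia.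
  by rewrite iter_cpred /t; [case: (ltnP i.+1 j); case: (eqVneq j k); lia | lia | lia].
rewrite center_step /=; have [-> ->] := fifo_hits k hits.
by rewrite !addn0.
Qed.

Lemma fifo_rounds m j : 1 <= j -> j + m <= k ->
  run_faults (fifo_step k) (fifo_cache j) (with_center (traject cpred j (m * (k - 1)))) = m /\
  run_cache (fifo_step k) (fifo_cache j) (with_center (traject cpred j (m * (k - 1)))) =
    fifo_cache (j + m).
Proof.
elim: m j => [|m IH] j hj hjm; first by rewrite addn0.
have njk : (j == k) = false by lia.
have [r1 r2] := @fifo_round j (ltac:(lia)).
rewrite njk in r1 r2.
rewrite mulSn trajectD with_center_cat run_faults_cat run_cache_cat iter_cpred_km1 ?njk; last lia.
have [r3 r4] := IH j.+1 isT (ltac:(lia)).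
by rewrite r1 r2 r3 r4; split; [|rewrite addSnnS].
Qed.

Lemma fifo_period :
  run_faults (fifo_step k) (fifo_cache k) (with_center (traject cpred k (k * (k - 1)))) = k.+1 /\
  run_cache (fifo_step k) (fifo_cache k) (with_center (traject cpred k (k * (k - 1)))) =
    fifo_cache k.
Proof.
have -> : k * (k - 1) = (k - 1) + (k - 1) * (k - 1) by rewrite -mulSn; congr (_ * _); lia.
have [r1 r2] := @fifo_round k (ltac:(lia)).
rewrite eqxx in r1 r2.
have [r3 r4] := @fifo_rounds (k - 1) 1 isT (ltac:(lia)).
rewrite trajectD with_center_cat run_faults_cat run_cache_cat iter_cpred_km1 ?eqxx; last lia.
by rewrite r1 r2 r3 r4; split; [lia | congr fifo_cache; lia].
Qed.

Lemma fifo_periods r :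
  run_faults (fifo_step k) (fifo_cache k) (with_center (traject cpred k (r * (k * (k - 1))))) =
    r * k.+1 /\
  run_cache (fifo_step k) (fifo_cache k) (with_center (traject cpred k (r * (k * (k - 1))))) =
    fifo_cache k.
Proof.
have [r1 r2] := fifo_period.
elim: r => [|r [IH1 IH2]] //.
have ek : iter (k * (k - 1)) cpred k = k by rewrite mulnC iter_cpred_mulk //; lia.
rewrite mulSn trajectD with_center_cat run_faults_cat run_cache_cat ek r1 r2 IH1 IH2.
by rewrite mulSn.
Qed.

Definition lru_window x := [seq iter i cpred x | i <- iota 1 (k - 1)].

Lemma lru_window_pair x : 1 <= x <= k ->
  run_faults (lru_step k) (rcons (lru_window x) 0) [:: x; 0] = 1 /\
  run_cache (lru_step k) (rcons (lru_window x) 0) [:: x; 0] = rcons (lru_window (cpred x)) 0.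
Proof.
move=> hx; have ek : k - 1 = (k - 2).+1 by lia.
set W' := [seq iter i cpred x | i <- iota 2 (k - 2)].
have eW : lru_window x = cpred x :: W' by rewrite /lru_window ek.
have eWc : lru_window (cpred x) = rcons W' x.
  rewrite /lru_window /W' ek -iota_rcons map_rcons -iterSr.
  rewrite (_ : (1 + (k - 2)).+1 = k); last lia.
  rewrite iter_cpred_k //; congr rcons.
  by rewrite -[2]/(1 + 1) iotaDl -map_comp; apply: eq_map => i /=; rewrite -iterSr.
have Wx y : y \in lru_window x -> (y != x) && (y != 0).
  move=> /mapP [i]; rewrite mem_iota => hi ->.
  by rewrite iter_cpred; [case: ifP; lia | lia | lia].
have xW : x \notin rcons (lru_window x) 0.
  by rewrite mem_rcons in_cons negb_or; apply/andP; split; [lia | apply/negP => /Wx; rewrite eqxx].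
have W'0 : 0 \notin W'.
  by apply/negP => h; have := Wx 0; rewrite eW in_cons h orbT eqxx andbF => /(_ isT).
have sW : size (rcons (lru_window x) 0) = k by rewrite size_rcons size_map size_iota; lia.
have st1 : lru_step k (rcons (lru_window x) 0) x = (rcons (rcons W' 0) x, true).
  by rewrite /lru_step (negbTE xW) /fault_insert sW ltnn eW.
have st2 : lru_step k (rcons (rcons W' 0) x) 0 = (rcons (rcons W' x) 0, false).
  rewrite /lru_step mem_rcons in_cons mem_rcons mem_head orbT.
  by rewrite -!cats1 -catA /= rem_cat_cons.
by rewrite /= st1 /= st2 /= eWc.
Qed.

Lemma lru_window_run n x : 1 <= x <= k ->
  run_faults (lru_step k) (rcons (lru_window x) 0) (with_center (traject cpred x n)) = n /\
  run_cache (lru_step k) (rcons (lru_window x) 0) (with_center (traject cpred x n)) =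
    rcons (lru_window (iter n cpred x)) 0.
Proof.
elim: n x => [|n IH] x hx //.
have [r1 r2] := lru_window_pair hx; have [r3 r4] := IH _ (cpred_range hx).
by rewrite trajectS with_center_cons run_faults_cat run_cache_cat r1 r2 r3 r4 iterSr.
Qed.

Lemma fifo_fill j m : 1 <= j -> j + m <= k ->
  run_faults (fifo_step k) (iota 0 j) (with_center (iota j m)) = m /\
  run_cache (fifo_step k) (iota 0 j) (with_center (iota j m)) = iota 0 (j + m).
Proof.
elim: m j => [|m IH] j hj hjm; first by rewrite addn0.
have st1 : fifo_step k (iota 0 j) j = (iota 0 j.+1, true).
  rewrite /fifo_step mem_iota ltnn andbF /fault_insert size_iota ifT; last lia.
  by rewrite -{2}(add0n j) iota_rcons.
have [r3 r4] := IH j.+1 isT (ltac:(lia)).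
rewrite -[iota j m.+1]/(j :: iota j.+1 m) with_center_cons run_faults_cat run_cache_cat.
rewrite /= st1 /=; change (0 :: iota 1 j) with (iota 0 j.+1).
by rewrite r3 r4 addnS.
Qed.

Lemma lru_fill j m : 1 <= j -> j + m <= k ->
  run_faults (lru_step k) (rcons (iota 1 j.-1) 0) (with_center (iota j m)) = m /\
  run_cache (lru_step k) (rcons (iota 1 j.-1) 0) (with_center (iota j m)) =
    rcons (iota 1 (j + m).-1) 0.
Proof.
elim: m j => [|m IH] j hj hjm; first by rewrite addn0.
have st1 : lru_step k (rcons (iota 1 j.-1) 0) j = (rcons (rcons (iota 1 j.-1) 0) j, true).
  rewrite /lru_step mem_rcons in_cons mem_iota ifF; last lia.
  by rewrite /fault_insert size_rcons size_iota ifT //; lia.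
have st2 : lru_step k (rcons (rcons (iota 1 j.-1) 0) j) 0 = (rcons (iota 1 j) 0, false).
  rewrite /lru_step mem_rcons in_cons mem_rcons mem_head orbT.
  by rewrite -!cats1 -catA /= rem_cat_cons ?(iota1_rcons hj) ?cats1 // mem_iota.
have [r3 r4] := IH j.+1 isT (ltac:(lia)).
rewrite -[iota j m.+1]/(j :: iota j.+1 m) with_center_cons run_faults_cat run_cache_cat.
by rewrite /= st1 /= st2 /= r3 r4 addnS.
Qed.

Lemma lru_reorder i : i <= k - 1 ->
  run_faults (lru_step k) (rcons (iota 1 (k - 1)) 0) (with_center (traject cpred (k - 1) i)) = 0 /\
  run_cache (lru_step k) (rcons (iota 1 (k - 1)) 0) (with_center (traject cpred (k - 1) i)) =
    rcons (iota 1 (k - 1 - i) ++ traject cpred (k - 1) i) 0.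
Proof.
elim: i => [|i IH] hi; first by rewrite subn0 cats0.
have [r1 r2] := IH (ltnW hi).
set a := k - 1 - i; set tr := traject cpred (k - 1) i.
have ha : 1 <= a by rewrite /a; lia.
have ey : iter i cpred (k - 1) = a by rewrite iter_cpred /a; [case: ifP; lia | lia | lia].
have tr0 : 0 \notin tr.
  by apply/negP => /trajectP [i' hi']; rewrite iter_cpred; [case: ifP; lia | lia | lia].
have ea : iota 1 a = iota 1 a.-1 ++ [:: a] by rewrite cats1 iota1_rcons.
have aA : a \notin iota 1 a.-1 by rewrite mem_iota; lia.
have A0 : 0 \notin iota 1 a.-1 by rewrite mem_iota.
have st1 : lru_step k (rcons (iota 1 a ++ tr) 0) a =
    (rcons (rcons (iota 1 a.-1 ++ tr) 0) a, false).
  rewrite /lru_step mem_rcons in_cons mem_cat ea mem_cat mem_head orbT orbT.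
  by rewrite -!cats1 -!catA /= rem_cat_cons // -!catA.
have st2 : lru_step k (rcons (rcons (iota 1 a.-1 ++ tr) 0) a) 0 =
    (rcons (iota 1 a.-1 ++ rcons tr a) 0, false).
  rewrite /lru_step mem_rcons in_cons mem_rcons mem_head orbT.
  rewrite -!cats1 -!catA /= catA rem_cat_cons; first by rewrite -!catA.
  by rewrite mem_cat negb_or A0.
rewrite trajectSr -[rcons (traject _ _ _) _]cats1 with_center_cat run_faults_cat run_cache_cat r1 r2 ey /= st1 /= st2 /=.
by rewrite (_ : k - 1 - i.+1 = a.-1) ?cats1 //; rewrite /a; lia.
Qed.

(* Warm-up on 1, ..., k-1; then k-1, ..., 1 again, which costs nothing but
   leaves LRU's cache in cyclic order; then r periods of the cyclic descent. *)
Definition adversary_leaves r := iota 1 (k - 1) ++ traject cpred (k - 1) (k - 1)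
  ++ traject cpred k (r * (k * (k - 1))).

Definition adversary r := 0 :: with_center (adversary_leaves r).

Lemma lru_window_k : lru_window k = traject cpred (k - 1) (k - 1).
Proof.
have ck : cpred k = k - 1 by rewrite /cpred; case: eqP; lia.
rewrite /lru_window traject_iter -[1]/(1 + 0) iotaDl -map_comp.
by apply: eq_map => i /=; rewrite -iterS iterSr ck.
Qed.

Lemma mem_traject_cpred y : y \in traject cpred (k - 1) (k - 1) -> 0 < y < k.
Proof. by move=> /trajectP [i hi ->]; rewrite iter_cpred; [case: ifP; lia | lia | lia]. Qed.

Lemma FIFO_adversary r : FIFO k (adversary r) = k + r * k.+1.
Proof.
rewrite /FIFO /adversary run_faults_cons /fifo_step /= (fault_insert_nil _ (ltnW k_gt1)) /=.
rewrite /adversary_leaves !with_center_cat !run_faults_cat ?run_cache_cat.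
have [-> ->] := @fifo_fill 1 (k - 1) isT (ltac:(lia)).
have -> : iota 0 (1 + (k - 1)) = fifo_cache k by rewrite /fifo_cache subnn; congr iota; lia.
have [-> ->] : run_faults (fifo_step k) (fifo_cache k) (with_center (traject cpred (k - 1) (k - 1))) = 0
    /\ run_cache (fifo_step k) (fifo_cache k) (with_center (traject cpred (k - 1) (k - 1))) = fifo_cache k.
  apply: fifo_hits; apply: all_with_center; first by rewrite mem_fifo_cache //; lia.
  by move=> y /mem_traject_cpred hy; rewrite mem_fifo_cache //; lia.
by have [-> _] := fifo_periods r; lia.
Qed.

Lemma LRU_adversary r : LRU k (adversary r) = k + r * (k * (k - 1)).
Proof.
rewrite /LRU /adversary run_faults_cons /lru_step /= (fault_insert_nil _ (ltnW k_gt1)) /=.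
rewrite /adversary_leaves !with_center_cat !run_faults_cat ?run_cache_cat.
have [-> ->] := @lru_fill 1 (k - 1) isT (ltac:(lia)).
rewrite (_ : (1 + (k - 1)).-1 = k - 1); last lia.
have [-> ->] := lru_reorder (leqnn (k - 1)).
rewrite subnn /= -lru_window_k.
by have [-> _] := @lru_window_run (r * (k * (k - 1))) k (ltac:(lia)); lia.
Qed.

Lemma size_adversary r : size (adversary r) = 1 + 2 * ((k - 1) + (k - 1) + r * (k * (k - 1))).
Proof. by rewrite /= size_with_center !size_cat size_iota !size_traject addnA. Qed.

Lemma leq_size_adversary r : r <= size (adversary r).
Proof.
have kk : 0 < k * (k - 1) by rewrite muln_gt0; lia.
by rewrite size_adversary; apply: leq_trans (leq_pmulr r kk) _; lia.
Qed.

Lemma adversary_leaves_range r : all (fun y => 0 < y <= k) (adversary_leaves r).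
Proof.
rewrite /adversary_leaves !all_cat; apply/and3P; split.
- by apply/allP => y; rewrite mem_iota; lia.
- by apply/allP => y /mem_traject_cpred; lia.
apply/allP => y /trajectP [i _ ->]; elim: i => [|i IH] /=; first lia.
exact: cpred_range.
Qed.

End Adversary.

Lemma path_with_center N xs : all (fun y => 0 < y < N.+1) xs ->
  path (fun a b => (a == b) || star a b) (inord 0 : 'I_N.+1) (map inord (with_center xs)).
Proof.
have v0 : val (inord 0 : 'I_N.+1) = 0 by rewrite /= inordK.
elim: xs => [|x xs IH] //= /andP[hx hxs].
have vx : nat_of_ord (inord x : 'I_N.+1) = x by rewrite inordK //; case/andP: hx.
have x0 : (inord x : 'I_N.+1) != inord 0.
  by apply/negP => /eqP /(congr1 val); rewrite /= v0 vx => x0; rewrite x0 in hx.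
by rewrite IH // andbT /star v0 !eqxx !orbT !andbT [inord 0 == _]eq_sym x0 !orbT.
Qed.

Lemma MinFL_lower k N n : 1 < k -> 0 < n ->
  (- ((k - 2) * n + 3 * k)%:Z <= (2 * (k - 1))%:Z * MinFL k N n)%R.
Proof.
move=> k_gt1 n_gt0; rewrite /MinFL /fmin; case: pickP => [t0 Pt0 | _]; last first.
  by rewrite mulr0 oppr_le0.
case: arg_minP => // t; rewrite /respects.
case e: (tval t) (size_tuple t) => [|x s] szt; first by rewrite -szt in n_gt0.
move=> xs _.
have center_uniq (a b : 'I_N) : val a == 0 -> val b == 0 -> a = b.
  by move=> /eqP a0 /eqP b0; apply: val_inj; rewrite a0 b0.
have := @LRU_le_FIFO _ k (fun y : 'I_N => val y == 0) k_gt1 center_uniq x s xs.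
rewrite szt mulrBr -!PoszM.
have -> : val t = x :: s by [].
by move: (2 * (k - 1) * LRU k _) (2 * (k - 1) * FIFO k _) ((k - 2) * n) => *; lia.
Qed.

Lemma MinFL_adversary k N r : 1 < k -> k < N ->
  (MinFL k N (size (adversary k r)) <= (r * k.+1)%:Z - (r * (k * (k - 1)))%:Z)%R.
Proof.
case: N => [//|N] k_gt1 kN.
set s := map (@inord N) (adversary k r).
have leaves_range := allP (adversary_leaves_range k_gt1 r).
have ss : map val s = adversary k r.
  rewrite -map_comp -[RHS]map_id; apply/eq_in_map => y.
  rewrite in_cons => /predU1P[->|/mem_with_center/predU1P[->|/leaves_range yk]];
    rewrite /= inordK //; lia.
have st : respects (@star N.+1) (in_tuple s).
  apply: path_with_center; apply/allP => y /leaves_range; lia.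
rewrite -(size_map (@inord N)) /MinFL /fmin.
case: pickP => [t0 Pt0 | /(_ (in_tuple s))]; last by rewrite st.
case: arg_minP => //= t _ /(_ _ st) /le_trans; apply.
have eF : FIFO k s = FIFO k (adversary k r).
  by rewrite /FIFO -ss (run_faults_fifo_map k val_inj [::] s).
have eL : LRU k s = LRU k (adversary k r).
  by rewrite /LRU -ss (run_faults_lru_map k val_inj [::] s).
by rewrite eF eL FIFO_adversary ?LRU_adversary //; lia.
Qed.

Section LiminfOfRatios.
Variable R : realType.
Local Open Scope ring_scope.

Lemma limn_einf_ratio_ge (x : R^nat) (a c : R) :
  (forall n, (0 < n)%N -> a * n%:R - c <= x n) ->
  (a%:E <= limn_einf (fun n => (x n / n%:R)%:E))%E.
Proof.
move=> xge; apply/lee_subgt0Pr => e e0.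
rewrite limn_einf_lim; apply: lime_ge; first exact: is_cvg_einfs.
have [n0 _ n0P] := nbhs_infty_ger (c / e).
exists n0.+1 => // n /= n0n; apply: le_ereal_inf_tmp => _ [m /= nm <-].
have m0 : (0 < m)%N by apply: leq_trans nm; apply: leq_trans n0n.
have cm : c <= m%:R * e.
  by rewrite -ler_pdivrMr //; apply: n0P; apply: leq_trans nm; apply: ltnW.
rewrite lee_fin ler_pdivlMr ?ltr0n // mulrBl.
by have := xge m m0; lra.
Qed.

Lemma limn_einf_ratio_le (x : R^nat) (m : nat -> nat) (b c : R) :
  (forall r, (r <= m r)%N) -> (forall r, x (m r) <= b * ((m r)%:R - c)) ->
  (limn_einf (fun n => (x n / n%:R)%:E) <= b%:E)%E.
Proof.
move=> rm xle; apply/lee_addgt0Pr => e e0.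
rewrite limn_einf_lim; apply: lime_le; first exact: is_cvg_einfs.
have [r0 _ r0P] := nbhs_infty_ger (`|b * c| / e).
exists 0%N => // n _; set r := (n + r0).+1.
apply: le_trans (_ : (x (m r) / (m r)%:R)%:E <= _)%E.
  by apply: ereal_inf_lbound; exists (m r) => //=; apply: leq_trans (rm r); rewrite /r; lia.
have mr0 : (0 < m r)%N by apply: leq_trans (rm r).
have bcm : `|b * c| <= (m r)%:R * e.
  by rewrite -ler_pdivrMr //; apply: r0P; apply: leq_trans (rm r); rewrite /r; lia.
rewrite lee_fin ler_pdivrMr ?ltr0n // mulrDl.
have := xle r; have := ler_norm (- (b * c)); rewrite normrN; lra.
Qed.

End LiminfOfRatios.

Section RatioBounds.
Variable R : realFieldType.
Local Open Scope ring_scope.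

Lemma MinFL_ratio_lower k N n : (1 < k)%N -> (0 < n)%N ->
  (- (1 / 2) + 1 / (2 * (k%:R - 1))) * n%:R - 3 * k%:R / (2 * (k%:R - 1))
    <= (MinFL k N n)%:~R :> R.
Proof.
move=> k_gt1 n_gt0; have := MinFL_lower N k_gt1 n_gt0.
rewrite -(ler_int R) rmorphN rmorphM /= -!pmulrn !natrD !natrM !natrB ?(ltnW k_gt1) //.
have k1 : 1 < k%:R :> R by rewrite ltr1n.
have -> : (- (1 / 2) + 1 / (2 * (k%:R - 1))) * n%:R - 3 * k%:R / (2 * (k%:R - 1))
    = - ((k%:R - 2) * n%:R + 3 * k%:R) / (2 * (k%:R - 1)) :> R by field; lra.
by rewrite ler_pdivrMr; lra.
Qed.

Lemma MinFL_ratio_adversary k N r : (1 < k)%N -> (k < N)%N ->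
  (MinFL k N (size (adversary k r)))%:~R <=
    (- (1 / 2) + 1 / (2 * (k%:R - 1)) + 1 / (2 * k%:R * (k%:R - 1)))
    * ((size (adversary k r))%:R - (4 * k%:R - 3)) :> R.
Proof.
move=> k_gt1 kN; have := MinFL_adversary r k_gt1 kN.
rewrite size_adversary -(ler_int R) rmorphB /= -!pmulrn -[k.+1]addn1.
rewrite !natrM !natrD !natrM !natrB ?(ltnW k_gt1) //.
have k1 : 1 < k%:R :> R by rewrite ltr1n.
move=> /le_trans; apply; rewrite le_eqVlt; apply/orP; left; apply/eqP.
by field; lra.
Qed.

End RatioBounds.

Local Open Scope ring_scope.

Theorem lemma8 (R : realType) (k N : nat) :
  (2 <= k)%N -> (k.+1 <= N)%N ->
  let u := fun n : nat => (((MinFL k N n)%:~R / n%:R : R)%:E) in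
  ((- (1 / 2) + 1 / (2 * (k%:R - 1)) : R)%:E <= limn_einf u)%E /\
  (limn_einf u <= (- (1 / 2) + 1 / (2 * (k%:R - 1))
                   + 1 / (2 * k%:R * (k%:R - 1)) : R)%:E)%E.
Proof.
move=> k_gt1 kN u; split.
- apply: (@limn_einf_ratio_ge _ _ _ (3 * k%:R / (2 * (k%:R - 1)))) => n n_gt0.
  exact: MinFL_ratio_lower.
- apply: (@limn_einf_ratio_le _ _ (fun r => size (adversary k r)) _ (4 * k%:R - 3)).
    exact: leq_size_adversary.
  by move=> r; apply: MinFL_ratio_adversary.
Qed.
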